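(* The compactness theorem holds for modal team logic $\mathrm{MTL}$.
   Context: $\mathrm{MTL}$ is the closure of modal logic $\mathrm{ML}$ under the strong negation $\sim$, the material implication (written here $\varphi\Rightarrow\psi$, true iff the valuation falsifies $\varphi$ or satisfies $\psi$), the linear implication $\multimap$ (lax splitting: $T\models\varphi\multimap\psi$ iff for all $S\cup U=T$, $S\models\varphi$ implies $U\models\psi$), and the modalities $\Box$ and $\Delta$. Valuations are pairs $(\mathcal{K},T)$ of a Kripke structure and a team $T$ of worlds; a classical $\mathrm{ML}$ formula holds iff it holds at every world of $T$; $(\mathcal{K},T)\models\Box\varphi$ iff the global successor team $R[T]$ satisfies $\varphi$; $(\mathcal{K},T)\models\Delta\varphi$ iff every successor team $T'$ of $T$ (every $w\in T$ has a successor in $T'$ and every $v\in T'$ has a predecessor in $T$) satisfies $\varphi$. It follows from the soundness and completeness of the system $\mathsf{H}^\Box\mathsf{L}\mathsf{S}\mathsf{M}$ for $\mathrm{MTL}$. *)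

From Stdlib Require Import List.


Inductive ML (P : Type) : Type :=
| MLatom : P -> ML P
| MLneg : ML P -> ML P
| MLand : ML P -> ML P -> ML P
| MLor : ML P -> ML P -> ML P
| MLbox : ML P -> ML P
| MLdia : ML P -> ML P.

Inductive MTL (P : Type) : Type :=
| Mml : ML P -> MTL P
| Msneg : MTL P -> MTL P
| Mimp : MTL P -> MTL P -> MTL P
| Mlimp : MTL P -> MTL P -> MTL P
| Mbox : MTL P -> MTL P
| Mdelta : MTL P -> MTL P.
Arguments MLatom {P}. Arguments MLneg {P}. Arguments MLand {P}.
Arguments MLor {P}. Arguments MLbox {P}. Arguments MLdia {P}.
Arguments Mml {P}. Arguments Msneg {P}. Arguments Mimp {P}.
Arguments Mlimp {P}. Arguments Mbox {P}. Arguments Mdelta {P}.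

Record Kripke (P : Type) : Type := {
  world : Type;
  rel : world -> world -> Prop;
  val : P -> world -> Prop
}.

Arguments world {P}. Arguments rel {P}. Arguments val {P}.

Definition team {P : Type} (K : Kripke P) := world K -> Prop.

Fixpoint ml_sat {P : Type} (K : Kripke P) (w : world K) (a : ML P) : Prop :=
  match a with
  | MLatom p => val K p w
  | MLneg a => ~ ml_sat K w a
  | MLand a b => ml_sat K w a /\ ml_sat K w b
  | MLor a b => ml_sat K w a \/ ml_sat K w b
  | MLbox a => forall v, rel K w v -> ml_sat K v a
  | MLdia a => exists v, rel K w v /\ ml_sat K v a
  end.

Definition image {P : Type} (K : Kripke P) (T : team K) : team K :=
  fun v => exists w, T w /\ rel K w v.

Definition succ_team {P : Type} (K : Kripke P) (T T' : team K) : Prop :=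
  (forall w, T w -> exists v, T' v /\ rel K w v) /\
  (forall v, T' v -> exists w, T w /\ rel K w v).

Fixpoint sat {P : Type} (K : Kripke P) (T : team K) (f : MTL P) : Prop :=
  match f with
  | Mml a => forall w, T w -> ml_sat K w a
  | Msneg f => ~ sat K T f
  | Mimp f g => ~ sat K T f \/ sat K T g
  | Mlimp f g => forall S U : team K,
      (forall w, T w <-> (S w \/ U w)) -> sat K S f -> sat K U g
  | Mbox f => sat K (image K T) f
  | Mdelta f => forall T' : team K, succ_team K T T' -> sat K T' f
  end.

Definition entails {P : Type} (Phi : MTL P -> Prop) (psi : MTL P) : Prop :=
  forall (K : Kripke P) (T : team K),
    (forall phi, Phi phi -> sat K T phi) -> sat K T psi.

(* Compactness via ultraproducts.  An MTL formula of modal depth k over the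
   atoms A cannot distinguish two teams that are k-bisimilar over A in the team
   sense (every world of either team has a k-bisimilar partner in the other).
   Over finitely many atoms, k-bisimilarity of worlds is determined by the truth
   values of finitely many Hintikka formulas, so a team is determined up to
   k-bisimilarity by the finite set of truth patterns it realizes.  Łoś's
   theorem for ML then shows that the ultraproduct of teams is k-bisimilar to
   almost every factor, i.e. Łoś's theorem holds for MTL.  If no finite subset
   of Phi entails psi, take a countermodel for each finite subset and an
   ultrafilter on finite subsets containing all upward cones; the ultraproduct
   satisfies Phi but not psi. *)

From Stdlib Require Import List Classical ClassicalEpsilon Lia.
From mathcomp Require filter.

Section Bisimulation.
Context {P : Type}.

Fixpoint ml_depth (a : ML P) : nat :=
  match a with
  | MLatom _ => 0
  | MLneg a => ml_depth a
  | MLand a b | MLor a b => Nat.max (ml_depth a) (ml_depth b)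
  | MLbox a | MLdia a => S (ml_depth a)
  end.

Fixpoint ml_atoms (a : ML P) : list P :=
  match a with
  | MLatom p => p :: nil
  | MLneg a => ml_atoms a
  | MLand a b | MLor a b => ml_atoms a ++ ml_atoms b
  | MLbox a | MLdia a => ml_atoms a
  end.

Fixpoint mtl_depth (f : MTL P) : nat :=
  match f with
  | Mml a => ml_depth a
  | Msneg f => mtl_depth f
  | Mimp f g | Mlimp f g => Nat.max (mtl_depth f) (mtl_depth g)
  | Mbox f | Mdelta f => S (mtl_depth f)
  end.

Fixpoint mtl_atoms (f : MTL P) : list P :=
  match f with
  | Mml a => ml_atoms a
  | Msneg f => mtl_atoms f
  | Mimp f g | Mlimp f g => mtl_atoms f ++ mtl_atoms g
  | Mbox f | Mdelta f => mtl_atoms f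
  end.

Fixpoint bisim (A : list P) (k : nat) {K1 K2 : Kripke P}
    (w1 : world K1) (w2 : world K2) : Prop :=
  (forall p, In p A -> (val K1 p w1 <-> val K2 p w2)) /\
  match k with
  | 0 => True
  | S k =>
      (forall v1, rel K1 w1 v1 -> exists v2, rel K2 w2 v2 /\ bisim A k v1 v2) /\
      (forall v2, rel K2 w2 v2 -> exists v1, rel K1 w1 v1 /\ bisim A k v1 v2)
  end.

Lemma bisim_sym A k : forall K1 K2 (w1 : world K1) (w2 : world K2),
  bisim A k w1 w2 -> bisim A k w2 w1.
Proof.
  induction k as [|k IH]; simpl; intros K1 K2 w1 w2 [Hval Hstep].
  - split; auto. intros p Hp; symmetry; auto.
  - destruct Hstep as [Hforth Hback].
    split; [intros p Hp; symmetry; auto | split].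
    + intros v Hv. destruct (Hback v Hv) as (v1 & ? & ?). eauto.
    + intros v Hv. destruct (Hforth v Hv) as (v1 & ? & ?). eauto.
Qed.

Lemma ml_sat_bisim A : forall a k K1 K2 (w1 : world K1) (w2 : world K2),
  ml_depth a <= k -> incl (ml_atoms a) A -> bisim A k w1 w2 ->
  (ml_sat K1 w1 a <-> ml_sat K2 w2 a).
Proof.
  induction a as [p|a IH|a1 IH1 a2 IH2|a1 IH1 a2 IH2|a IH|a IH];
    intros k K1 K2 w1 w2 Hdepth Hatoms Hbis; simpl in *.
  - destruct k; apply (proj1 Hbis), Hatoms; left; reflexivity.
  - rewrite (IH k K1 K2 w1 w2); tauto.
  - apply incl_app_inv in Hatoms as [? ?].
    rewrite (IH1 k K1 K2 w1 w2), (IH2 k K1 K2 w1 w2); try tauto; lia.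
  - apply incl_app_inv in Hatoms as [? ?].
    rewrite (IH1 k K1 K2 w1 w2), (IH2 k K1 K2 w1 w2); try tauto; lia.
  - destruct k as [|k]; [lia|]. destruct Hbis as (_ & Hforth & Hback). split.
    + intros H v2 Hv2. destruct (Hback v2 Hv2) as (v1 & Hr & Hv).
      apply (IH k K1 K2 v1 v2); auto; lia.
    + intros H v1 Hv1. destruct (Hforth v1 Hv1) as (v2 & Hr & Hv).
      apply (IH k K1 K2 v1 v2); auto; lia.
  - destruct k as [|k]; [lia|]. destruct Hbis as (_ & Hforth & Hback). split.
    + intros (v1 & Hv1 & H). destruct (Hforth v1 Hv1) as (v2 & Hr & Hv).
      exists v2; split; auto. apply (IH k K1 K2 v1 v2); auto; lia.
    + intros (v2 & Hv2 & H). destruct (Hback v2 Hv2) as (v1 & Hr & Hv).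
      exists v1; split; auto. apply (IH k K1 K2 v1 v2); auto; lia.
Qed.

Definition team_bisim A k {K1 K2 : Kripke P} (T1 : team K1) (T2 : team K2) :=
  (forall w1, T1 w1 -> exists w2, T2 w2 /\ bisim A k w1 w2) /\
  (forall w2, T2 w2 -> exists w1, T1 w1 /\ bisim A k w1 w2).

Lemma team_bisim_sym A k K1 K2 (T1 : team K1) (T2 : team K2) :
  team_bisim A k T1 T2 -> team_bisim A k T2 T1.
Proof.
  intros [H1 H2]; split.
  - intros w Hw; destruct (H2 w Hw) as (x & ? & ?); eauto using bisim_sym.
  - intros w Hw; destruct (H1 w Hw) as (x & ? & ?); eauto using bisim_sym.
Qed.

Lemma team_bisim_split A k K1 K2 (T1 : team K1) (T2 S2 U2 : team K2) :
  team_bisim A k T1 T2 -> (forall w, T2 w <-> (S2 w \/ U2 w)) ->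
  exists S1 U1 : team K1, (forall w, T1 w <-> (S1 w \/ U1 w)) /\
    team_bisim A k S1 S2 /\ team_bisim A k U1 U2.
Proof.
  intros [H1 H2] Hsplit.
  exists (fun w => T1 w /\ exists w2, S2 w2 /\ bisim A k w w2).
  exists (fun w => T1 w /\ exists w2, U2 w2 /\ bisim A k w w2).
  split; [|split; split].
  - intros w; split.
    + intros Hw. destruct (H1 w Hw) as (w2 & Hw2 & ?).
      apply Hsplit in Hw2 as [?|?]; [left|right]; eauto.
    + intros [[? _]|[? _]]; auto.
  - intros w (_ & w2 & ? & ?); eauto.
  - intros w2 Hw2. destruct (H2 w2 (proj2 (Hsplit w2) (or_introl Hw2))) as (w1 & ? & ?).
    exists w1; split; eauto.
  - intros w (_ & w2 & ? & ?); eauto.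
  - intros w2 Hw2. destruct (H2 w2 (proj2 (Hsplit w2) (or_intror Hw2))) as (w1 & ? & ?).
    exists w1; split; eauto.
Qed.

Lemma team_bisim_image A k K1 K2 (T1 : team K1) (T2 : team K2) :
  team_bisim A (S k) T1 T2 -> team_bisim A k (image K1 T1) (image K2 T2).
Proof.
  intros [H1 H2]; split.
  - intros v1 (w1 & Hw1 & Hr). destruct (H1 w1 Hw1) as (w2 & Hw2 & _ & Hforth & _).
    destruct (Hforth v1 Hr) as (v2 & ? & ?). exists v2; split; eauto. exists w2; auto.
  - intros v2 (w2 & Hw2 & Hr). destruct (H2 w2 Hw2) as (w1 & Hw1 & _ & _ & Hback).
    destruct (Hback v2 Hr) as (v1 & ? & ?). exists v1; split; eauto. exists w1; auto.
Qed.

Lemma team_bisim_succ A k K1 K2 (T1 : team K1) (T2 T2' : team K2) :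
  team_bisim A (S k) T1 T2 -> succ_team K2 T2 T2' ->
  exists T1', succ_team K1 T1 T1' /\ team_bisim A k T1' T2'.
Proof.
  intros [H1 H2] [Hdown Hup].
  exists (fun v1 => image K1 T1 v1 /\ exists v2, T2' v2 /\ bisim A k v1 v2).
  split; split.
  - intros w1 Hw1. destruct (H1 w1 Hw1) as (w2 & Hw2 & _ & _ & Hback).
    destruct (Hdown w2 Hw2) as (v2 & Hv2 & Hr).
    destruct (Hback v2 Hr) as (v1 & Hr1 & ?).
    exists v1; split; auto. split; [exists w1; auto | eauto].
  - intros v1 [(w1 & ? & ?) _]; eauto.
  - intros v1 (_ & v2 & ? & ?); eauto.
  - intros v2 Hv2. destruct (Hup v2 Hv2) as (w2 & Hw2 & Hr).
    destruct (H2 w2 Hw2) as (w1 & Hw1 & _ & _ & Hback).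
    destruct (Hback v2 Hr) as (v1 & Hr1 & ?).
    exists v1; split; auto. split; [exists w1; auto | eauto].
Qed.

Lemma sat_team_bisim A : forall f k K1 K2 (T1 : team K1) (T2 : team K2),
  mtl_depth f <= k -> incl (mtl_atoms f) A -> team_bisim A k T1 T2 ->
  (sat K1 T1 f <-> sat K2 T2 f).
Proof.
  induction f as [a|f IH|f1 IH1 f2 IH2|f1 IH1 f2 IH2|f IH|f IH];
    intros k K1 K2 T1 T2 Hdepth Hatoms HT; simpl in *.
  - destruct HT as [H1 H2]. split.
    + intros H w2 Hw2. destruct (H2 w2 Hw2) as (w1 & Hw1 & Hb).
      apply (ml_sat_bisim A a k K1 K2 w1 w2); auto.
    + intros H w1 Hw1. destruct (H1 w1 Hw1) as (w2 & Hw2 & Hb).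
      apply (ml_sat_bisim A a k K1 K2 w1 w2); auto.
  - rewrite (IH k K1 K2 T1 T2); tauto.
  - apply incl_app_inv in Hatoms as [? ?].
    rewrite (IH1 k K1 K2 T1 T2), (IH2 k K1 K2 T1 T2); try tauto; lia.
  - apply incl_app_inv in Hatoms as [Hatoms1 Hatoms2].
    assert (HT' := team_bisim_sym _ _ _ _ _ _ HT). split.
    + intros H S2 U2 Hsplit HS2.
      destruct (team_bisim_split A k K1 K2 T1 T2 S2 U2 HT Hsplit)
        as (S1 & U1 & Hsplit1 & HS & HU).
      apply (IH2 k K1 K2 U1 U2); auto; [lia|].
      apply (H S1 U1 Hsplit1), (IH1 k K1 K2 S1 S2); auto; lia.
    + intros H S1 U1 Hsplit HS1.
      destruct (team_bisim_split A k K2 K1 T2 T1 S1 U1 HT' Hsplit)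
        as (S2 & U2 & Hsplit2 & HS & HU).
      apply (IH2 k K2 K1 U2 U1); auto; [lia|].
      apply (H S2 U2 Hsplit2), (IH1 k K2 K1 S2 S1); auto; lia.
  - destruct k as [|k]; [lia|].
    apply (IH k); auto; [lia|]. apply team_bisim_image; auto.
  - destruct k as [|k]; [lia|].
    assert (HT' := team_bisim_sym _ _ _ _ _ _ HT). split.
    + intros H T2' Hsucc.
      destruct (team_bisim_succ A k K1 K2 T1 T2 T2' HT Hsucc) as (T1' & Hsucc1 & HT1).
      apply (IH k K1 K2 T1' T2'); auto; lia.
    + intros H T1' Hsucc.
      destruct (team_bisim_succ A k K2 K1 T2 T1 T1' HT' Hsucc) as (T2' & Hsucc2 & HT2).
      apply (IH k K2 K1 T2' T1'); auto; lia.
Qed.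

End Bisimulation.

Section Hintikka.
Context {P : Type}.

Definition truth (Q : Prop) : bool :=
  if excluded_middle_informative Q then true else false.

Definition truth_pattern (K : Kripke P) (w : world K) (F : list (ML P)) : list bool :=
  map (fun a => truth (ml_sat K w a)) F.

Definition agree_on (F : list (ML P)) {K1 K2 : Kripke P}
    (w1 : world K1) (w2 : world K2) : Prop :=
  forall a, In a F -> (ml_sat K1 w1 a <-> ml_sat K2 w2 a).

Lemma length_truth_pattern K w F : length (truth_pattern K w F) = length F.
Proof. apply length_map. Qed.

Lemma truth_eq (Q1 Q2 : Prop) : truth Q1 = truth Q2 <-> (Q1 <-> Q2).
Proof.
  unfold truth.
  destruct (excluded_middle_informative Q1), (excluded_middle_informative Q2);
    split; intros H; try discriminate; tauto.
Qed.

Lemma truth_pattern_eq K1 K2 (w1 : world K1) (w2 : world K2) F :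
  truth_pattern K1 w1 F = truth_pattern K2 w2 F <-> agree_on F w1 w2.
Proof.
  induction F as [|a F IH]; simpl.
  - split; [intros _ b []|reflexivity].
  - split.
    + intros H. injection H as Ha HF. apply truth_eq in Ha. apply IH in HF.
      intros b [<-|Hb]; auto.
    + intros H. f_equal.
      * apply truth_eq, H; left; reflexivity.
      * apply IH. intros b Hb; apply H; right; exact Hb.
Qed.

Fixpoint all_patterns (n : nat) : list (list bool) :=
  match n with
  | 0 => nil :: nil
  | S n => map (cons true) (all_patterns n) ++ map (cons false) (all_patterns n)
  end.

Lemma in_all_patterns s : In s (all_patterns (length s)).
Proof.
  induction s as [|b s IH]; simpl; auto.
  apply in_or_app. destruct b; [left|right]; apply in_map; auto.
Qed.

Lemma in_all_patterns_truth_pattern K w F :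
  In (truth_pattern K w F) (all_patterns (length F)).
Proof. rewrite <- (length_truth_pattern K w F). apply in_all_patterns. Qed.

(* Formulas need an atom: MTL has no propositional constants, so truth is
   expressed with a fixed atom [p0]. *)
Variable p0 : P.

Definition ml_true : ML P := MLneg (MLand (MLatom p0) (MLneg (MLatom p0))).

Definition ml_lit (a : ML P) (b : bool) : ML P := if b then a else MLneg a.

Fixpoint pattern_formula (F : list (ML P)) (s : list bool) : ML P :=
  match F, s with
  | a :: F, b :: s => MLand (ml_lit a b) (pattern_formula F s)
  | _, _ => ml_true
  end.

Lemma ml_sat_pattern_formula K w F : ml_sat K w (pattern_formula F (truth_pattern K w F)).
Proof.
  induction F as [|a F IH]; simpl; [tauto|]. split; auto.
  unfold ml_lit, truth. destruct (excluded_middle_informative (ml_sat K w a)); auto.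
Qed.

Lemma truth_pattern_of_sat K w : forall F s,
  length s = length F -> ml_sat K w (pattern_formula F s) -> truth_pattern K w F = s.
Proof.
  induction F as [|a F IH]; intros [|b s]; simpl; intros Hlen H;
    try discriminate; auto.
  destruct H as [Hlit Hrest]. f_equal; [|apply IH; auto].
  unfold ml_lit, truth in *.
  destruct b; destruct (excluded_middle_informative (ml_sat K w a));
    simpl in Hlit; first [reflexivity | tauto].
Qed.

Fixpoint hintikka_basis (A : list P) (k : nat) : list (ML P) :=
  match k with
  | 0 => map MLatom A
  | S k => map MLatom A ++
      map (fun s => MLdia (pattern_formula (hintikka_basis A k) s))
          (all_patterns (length (hintikka_basis A k)))
  end.

Lemma hintikka_forth A k
  (IH : forall K1 K2 (w1 : world K1) (w2 : world K2),
      agree_on (hintikka_basis A k) w1 w2 -> bisim A k w1 w2)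
  K1 K2 (w1 : world K1) (w2 : world K2) :
  agree_on (hintikka_basis A (S k)) w1 w2 ->
  forall v1, rel K1 w1 v1 -> exists v2, rel K2 w2 v2 /\ bisim A k v1 v2.
Proof.
  intros H v1 Hr.
  set (F := hintikka_basis A k). set (s := truth_pattern K1 v1 F).
  assert (Hin : In (MLdia (pattern_formula F s)) (hintikka_basis A (S k))).
  { simpl. apply in_or_app; right.
    apply (in_map (fun s => MLdia (pattern_formula F s))).
    apply in_all_patterns_truth_pattern. }
  destruct (proj1 (H _ Hin)) as (v2 & Hr2 & Hs).
  { exists v1; split; auto. apply ml_sat_pattern_formula. }
  exists v2; split; auto. apply IH, truth_pattern_eq.
  symmetry; apply truth_pattern_of_sat; auto. apply length_truth_pattern.
Qed.

Lemma agree_on_hintikka_bisim A : forall k K1 K2 (w1 : world K1) (w2 : world K2),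
  agree_on (hintikka_basis A k) w1 w2 -> bisim A k w1 w2.
Proof.
  induction k as [|k IH]; intros K1 K2 w1 w2 H.
  - split; auto. intros p Hp. apply (H (MLatom p)), in_map, Hp.
  - split; [|split].
    + intros p Hp. apply (H (MLatom p)). simpl. apply in_or_app; left; apply in_map, Hp.
    + apply hintikka_forth; auto.
    + intros v2 Hv2.
      assert (H' : agree_on (hintikka_basis A (S k)) w2 w1).
      { intros a Ha; symmetry; apply H, Ha. }
      destruct (hintikka_forth A k IH K2 K1 w2 w1 H' v2 Hv2) as (v1 & ? & ?).
      exists v1; split; auto. apply bisim_sym; auto.
Qed.

End Hintikka.

Record ultrafilter {I : Type} (U : (I -> Prop) -> Prop) : Prop := {
  ultra_and : forall A B, U A -> U B -> U (fun i => A i /\ B i);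
  ultra_mono : forall A B : I -> Prop, (forall i, A i -> B i) -> U A -> U B;
  ultra_witness : forall A, U A -> exists i, A i;
  ultra_em : forall A, U A \/ U (fun i => ~ A i)
}.
Arguments ultra_and {I U}. Arguments ultra_mono {I U}.
Arguments ultra_witness {I U}. Arguments ultra_em {I U}.

Section Ultraproduct.
Context {P I : Type} (K : I -> Kripke P) (d : forall i, world (K i)).
Context (U : (I -> Prop) -> Prop) (HU : ultrafilter U).

Lemma ultra_true : U (fun _ => True).
Proof.
  destruct (ultra_em HU (fun _ => False)) as [H|H].
  - destruct (ultra_witness HU _ H) as [_ []].
  - eapply (ultra_mono HU); [|exact H]; auto.
Qed.

Lemma ultra_not A : U (fun i => ~ A i) -> ~ U A.
Proof.
  intros H1 H2. destruct (ultra_witness HU _ (ultra_and HU _ _ H1 H2)) as (i & ? & ?); auto.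
Qed.

Lemma ultra_forall_in {X : Type} (l : list X) (Q : X -> I -> Prop) :
  (forall x, In x l -> U (Q x)) -> U (fun i => forall x, In x l -> Q x i).
Proof.
  induction l as [|x l IH]; intros H.
  - eapply (ultra_mono HU); [|apply ultra_true]. intros i _ x [].
  - eapply (ultra_mono HU);
      [|exact (ultra_and HU _ _ (H x (or_introl eq_refl))
                                        (IH (fun y Hy => H y (or_intror Hy))))].
    intros i [H1 H2] y [<-|Hy]; auto.
Qed.

Definition ultraproduct : Kripke P :=
  {| world := forall i, world (K i);
     rel := fun f g => U (fun i => rel (K i) (f i) (g i));
     val := fun p f => U (fun i => val (K i) p (f i)) |}.

Lemma ultra_choice (Q : forall i, world (K i) -> Prop) :
  U (fun i => exists x, Q i x) -> exists g : world ultraproduct, U (fun i => Q i (g i)).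
Proof.
  intros H. exists (fun i => epsilon (inhabits (d i)) (Q i)).
  eapply (ultra_mono HU); [|exact H].
  intros i Hi. exact (epsilon_spec (inhabits (d i)) (Q i) Hi).
Qed.

Lemma ml_los : forall a (f : world ultraproduct),
  ml_sat ultraproduct f a <-> U (fun i => ml_sat (K i) (f i) a).
Proof.
  induction a as [p|a IH|a1 IH1 a2 IH2|a1 IH1 a2 IH2|a IH|a IH]; intros f; simpl.
  - tauto.
  - rewrite IH. split; [|apply ultra_not].
    intros H. destruct (ultra_em HU (fun i => ml_sat (K i) (f i) a)); tauto.
  - rewrite IH1, IH2. split.
    + intros [H1 H2]; apply (ultra_and HU); auto.
    + intros H; split; (eapply (ultra_mono HU); [|exact H]); simpl; tauto.
  - rewrite IH1, IH2. split.
    + intros [H|H]; (eapply (ultra_mono HU); [|exact H]); simpl; tauto.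
    + intros H. destruct (ultra_em HU (fun i => ml_sat (K i) (f i) a1)) as [H1|H1];
        [left; exact H1|right].
      eapply (ultra_mono HU); [|exact (ultra_and HU _ _ H H1)]. simpl; tauto.
  - split.
    + intros H. destruct (ultra_em HU (fun i => forall v, rel (K i) (f i) v -> ml_sat (K i) v a))
        as [Hall|Hnot]; [exact Hall|exfalso].
      destruct (ultra_choice (fun i v => rel (K i) (f i) v /\ ~ ml_sat (K i) v a)) as [g Hg].
      { eapply (ultra_mono HU); [|exact Hnot]. intros i Hi.
        apply not_all_ex_not in Hi as [v Hv]. exists v. tauto. }
      assert (Hsat : ml_sat ultraproduct g a).
      { apply H. eapply (ultra_mono HU); [|exact Hg]. simpl; tauto. }
      apply IH in Hsat. apply (ultra_not (fun i => ml_sat (K i) (g i) a)); auto.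
      eapply (ultra_mono HU); [|exact Hg]. simpl; tauto.
    + intros H g Hr. apply IH.
      eapply (ultra_mono HU); [|exact (ultra_and HU _ _ H Hr)]. simpl.
      intros i [H1 H2]; auto.
  - split.
    + intros (g & Hr & Hs). apply IH in Hs.
      eapply (ultra_mono HU); [|exact (ultra_and HU _ _ Hr Hs)]. simpl; eauto.
    + intros H. destruct (ultra_choice (fun i v => rel (K i) (f i) v /\ ml_sat (K i) v a) H)
        as [g Hg].
      exists g; split; [|apply IH];
        (eapply (ultra_mono HU); [|exact Hg]); simpl; tauto.
Qed.

Lemma ultra_agree_on (F : list (ML P)) (f : world ultraproduct) :
  U (fun i => agree_on F (f i) f).
Proof.
  apply (ultra_forall_in F (fun a i => ml_sat (K i) (f i) a <-> ml_sat ultraproduct f a)).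
  intros a _. destruct (classic (ml_sat ultraproduct f a)) as [H|H].
  - pose proof (proj1 (ml_los a f) H) as Hlos.
    eapply (ultra_mono HU); [|exact Hlos]. simpl; tauto.
  - destruct (ultra_em HU (fun i => ml_sat (K i) (f i) a)) as [H1|H1].
    + apply ml_los in H1; tauto.
    + eapply (ultra_mono HU); [|exact H1]. simpl; tauto.
Qed.

Variable T : forall i, team (K i).

Definition team_ultraproduct : team ultraproduct := fun f => U (fun i => T i (f i)).

Definition realizes {K' : Kripke P} (T' : team K') (F : list (ML P)) (s : list bool) :=
  exists w, T' w /\ truth_pattern K' w F = s.

Lemma ultra_realizes F s :
  U (fun i => realizes team_ultraproduct F s <-> realizes (T i) F s).
Proof.
  destruct (classic (realizes team_ultraproduct F s)) as [(f & Hf & Hs)|Hnot].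
  - eapply (ultra_mono HU); [|exact (ultra_and HU _ _ Hf (ultra_agree_on F f))].
    intros i [HT Hagree]. split; [intros _|intros; exists f; auto].
    exists (f i); split; auto. rewrite <- Hs. apply truth_pattern_eq, Hagree.
  - destruct (ultra_em HU (fun i => realizes (T i) F s)) as [Hreal|Hunreal].
    + exfalso. apply Hnot.
      destruct (ultra_choice (fun i x => T i x /\ truth_pattern (K i) x F = s) Hreal)
        as [g Hg].
      destruct (ultra_witness HU _ (ultra_and HU _ _ Hg (ultra_agree_on F g)))
        as (i & (_ & Hs) & Hagree).
      exists g; split.
      * eapply (ultra_mono HU); [|exact Hg]. simpl; tauto.
      * rewrite <- Hs. symmetry. apply truth_pattern_eq, Hagree.
    + eapply (ultra_mono HU); [|exact Hunreal]. simpl; tauto.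
Qed.

Lemma ultra_team_bisim (p0 : P) A k : U (fun i => team_bisim A k team_ultraproduct (T i)).
Proof.
  set (F := hintikka_basis p0 A k).
  assert (Hbisim : forall K1 K2 (w1 : world K1) (w2 : world K2),
    truth_pattern K1 w1 F = truth_pattern K2 w2 F -> bisim A k w1 w2).
  { intros K1 K2 w1 w2 Hs. apply (agree_on_hintikka_bisim p0), truth_pattern_eq, Hs. }
  assert (Hall := ultra_forall_in (all_patterns (length F))
                    (fun s i => realizes team_ultraproduct F s <-> realizes (T i) F s)
                    (fun s _ => ultra_realizes F s)).
  eapply (ultra_mono HU); [|exact Hall]. intros i Hi. split.
  - intros f Hf.
    destruct (proj1 (Hi _ (in_all_patterns_truth_pattern _ f F))) as (x & Hx & Hs);
      [exists f; auto|].
    exists x; split; [exact Hx|]. apply Hbisim; symmetry; exact Hs.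
  - intros x Hx.
    destruct (proj2 (Hi _ (in_all_patterns_truth_pattern _ x F))) as (f & Hf & Hs);
      [exists x; auto|].
    exists f; split; [exact Hf|]. apply Hbisim; exact Hs.
Qed.

Lemma sat_team_los (p0 : P) f : sat ultraproduct team_ultraproduct f <-> U (fun i => sat (K i) (T i) f).
Proof.
  pose proof (ultra_team_bisim p0 (mtl_atoms f) (mtl_depth f)) as HT.
  assert (Hinv : forall i, team_bisim (mtl_atoms f) (mtl_depth f) team_ultraproduct (T i) ->
                   (sat ultraproduct team_ultraproduct f <-> sat (K i) (T i) f)).
  { intros i Hi. apply (sat_team_bisim (mtl_atoms f) f (mtl_depth f)); auto. apply incl_refl. }
  split.
  - intros H. eapply (ultra_mono HU); [|exact HT]. intros i Hi; apply Hinv; auto.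
  - intros H. destruct (ultra_witness HU _ (ultra_and HU _ _ H HT)) as (i & Hs & Hi).
    apply (Hinv i Hi), Hs.
Qed.

End Ultraproduct.

Section IsolatedWorld.
Context {P : Type}.

(* Adding an isolated world [None] that lies outside every team makes every
   world type inhabited, as the choice of successors in the ultraproduct
   requires, without changing the satisfied formulas. *)
Definition add_isolated_world (K : Kripke P) : Kripke P :=
  {| world := option (world K);
     rel := fun a b => match a, b with Some x, Some y => rel K x y | _, _ => False end;
     val := fun p a => match a with Some x => val K p x | None => False end |}.

Definition lift_team {K : Kripke P} (T : team K) : team (add_isolated_world K) :=
  fun a => match a with Some x => T x | None => False end.

Lemma bisim_add_isolated_world A K : forall k (w : world K),
  bisim A k w (Some w : world (add_isolated_world K)).
Proof.
  induction k as [|k IH]; intros w; split; simpl; try tauto. split.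
  - intros v Hv. exists (Some v); auto.
  - intros [v|] Hv; [|contradiction]. exists v; auto.
Qed.

Lemma sat_add_isolated_world K (T : team K) f :
  sat K T f <-> sat (add_isolated_world K) (lift_team T) f.
Proof.
  apply (sat_team_bisim (mtl_atoms f) f (mtl_depth f)); [auto|apply incl_refl|]. split.
  - intros w Hw. exists (Some w); split; auto. apply bisim_add_isolated_world.
  - intros [w|] Hw; [|contradiction]. exists w; split; auto. apply bisim_add_isolated_world.
Qed.

End IsolatedWorld.

Lemma ultrafilter_of_base {I J : Type} (B : J -> I -> Prop) (j0 : J)
  (B_nonempty : forall j, exists i, B j i)
  (B_directed : forall j1 j2, exists j, forall i, B j i -> B j1 i /\ B j2 i) :
  exists U : (I -> Prop) -> Prop, ultrafilter U /\ forall j, U (B j).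
Proof.
  pose (F := fun A : I -> Prop => exists j, forall i, B j i -> A i).
  assert (HF : filter.ProperFilter F).
  { apply filter.Build_ProperFilter_ex.
    - intros A (j & Hj). destruct (B_nonempty j) as [i Hi]. eauto.
    - constructor.
      + exists j0. constructor.
      + intros A1 A2 (j1 & H1) (j2 & H2). destruct (B_directed j1 j2) as (j & Hj).
        exists j. intros i Hi. destruct (Hj i Hi). split; auto.
      + intros A1 A2 Hsub (j & Hj). exists j. intros i Hi. apply Hsub, Hj, Hi. }
  destruct (filter.ultraFilterLemma HF) as (U & HUltra & HFU).
  exists U; split; [|intros j; apply HFU; exists j; auto].
  split.
  - intros A1 A2 H1 H2. exact (filter.filterI H1 H2).
  - intros A1 A2 Hsub H. exact (filter.filterS Hsub H).
  - intros A H. exact (filter.filter_ex H).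
  - intros A. exact (filter.in_ultra_setVsetC A HUltra).
Qed.

Definition finite_subset {X : Type} (Phi : X -> Prop) : Type :=
  {L : list X | forall x, In x L -> Phi x}.

Lemma ultrafilter_finite_subset {X : Type} (Phi : X -> Prop) :
  exists U : (finite_subset Phi -> Prop) -> Prop,
    ultrafilter U /\ forall x, Phi x -> U (fun L => In x (proj1_sig L)).
Proof.
  set (cone := fun L0 L : finite_subset Phi => incl (proj1_sig L0) (proj1_sig L)).
  destruct (ultrafilter_of_base cone) as (U & HU & Hcone).
  - exists nil. intros x [].
  - intros L. exists L. apply incl_refl.
  - intros [L1 H1] [L2 H2].
    assert (H : forall x, In x (L1 ++ L2) -> Phi x)
      by (intros x Hx; apply in_app_or in Hx as [Hx|Hx]; auto).
    exists (exist _ (L1 ++ L2) H). intros [L HL]; unfold cone; simpl; intros Hincl.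
    split; eapply incl_tran; [apply incl_appl, incl_refl|exact Hincl
                             |apply incl_appr, incl_refl|exact Hincl].
  - exists U; split; [exact HU|]. intros x Hx.
    assert (Hsingle : forall y, In y (x :: nil) -> Phi y)
      by (intros y [<-|[]]; exact Hx).
    eapply (ultra_mono HU); [|exact (Hcone (exist _ (x :: nil) Hsingle))].
    intros L HL. apply HL. left; reflexivity.
Qed.

Lemma choose_models {P I : Type} (R : I -> forall K : Kripke P, team K -> Prop) :
  (forall i, exists K (T : team K), R i K T) ->
  exists (K : I -> Kripke P) (T : forall i, team (K i)), forall i, R i (K i) (T i).
Proof.
  intros H.
  pose (choiceK := fun i => constructive_indefinite_description _ (H i)).
  exists (fun i => proj1_sig (choiceK i)).
  exists (fun i => proj1_sig (constructive_indefinite_description _ (proj2_sig (choiceK i)))).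
  intros i. exact (proj2_sig (constructive_indefinite_description _ (proj2_sig (choiceK i)))).
Qed.

Fixpoint ml_some_atom {P : Type} (a : ML P) : P :=
  match a with
  | MLatom p => p
  | MLneg a | MLand a _ | MLor a _ | MLbox a | MLdia a => ml_some_atom a
  end.

Fixpoint mtl_some_atom {P : Type} (f : MTL P) : P :=
  match f with
  | Mml a => ml_some_atom a
  | Msneg f | Mimp f _ | Mlimp f _ | Mbox f | Mdelta f => mtl_some_atom f
  end.

Theorem mainTheorem4 (P : Type) (Phi : MTL P -> Prop) (psi : MTL P) :
  entails Phi psi ->
  exists L : list (MTL P),
    (forall phi, In phi L -> Phi phi) /\
    entails (fun phi => In phi L) psi.
Proof.
  intros Hent. apply NNPP; intros Hno.
  assert (Hcounter : forall L : finite_subset Phi, exists (K : Kripke P) (T : team K),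
    (forall phi, In phi (proj1_sig L) -> sat K T phi) /\ ~ sat K T psi).
  { intros [L HL]. apply NNPP; intros Hn. apply Hno. exists L; split; [exact HL|].
    intros K T HT. apply NNPP; intros Hs. apply Hn. exists K, T; auto. }
  destruct (choose_models _ Hcounter) as (K & T & HKT).
  destruct (ultrafilter_finite_subset Phi) as (U & HU & HPhi).
  pose (Kx := fun L => add_isolated_world (K L)).
  pose (Tx := fun L => lift_team (T L) : team (Kx L)).
  pose (p0 := mtl_some_atom psi).
  assert (Hpsi : U (fun L => sat (Kx L) (Tx L) psi)).
  { apply (sat_team_los Kx (fun _ => None) U HU Tx p0), Hent.
    intros phi Hphi. apply (sat_team_los Kx (fun _ => None) U HU Tx p0).
    eapply (ultra_mono HU); [|exact (HPhi phi Hphi)].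
    intros L HL. exact (proj1 (sat_add_isolated_world (K L) (T L) phi) (proj1 (HKT L) phi HL)). }
  destruct (ultra_witness HU _ Hpsi) as [L HL].
  exact (proj2 (HKT L) (proj2 (sat_add_isolated_world (K L) (T L) psi) HL)).
Qed.
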